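(* Let $n_d\ge 1$ and for $i=1,\dots,n_d$ let $S_i>0$, $\overline{P_i}\in(0,1]$ and $\theta_i\in[0,\pi/2]$. For $S>0$, $\overline{P}\in(0,1]$, $\theta\in[0,\pi/2]$ define $\mathcal{X}(S,\overline{P},\theta)=\{(P,Q)\in\mathbb{R}^2: 0\le P\le S\overline{P},\ Q^2\le S^2-P^2,\ |Q|\le\tan(\theta)P\}$, where for $\theta=\pi/2$ the constraint $|Q|\le\tan(\theta)P$ is omitted. Let $S_0=\min_i S_i$, $\overline{P_0}=\min_i\overline{P_i}$, $\theta_0=\min_i\theta_i$. Then $$\mathcal{X}(n_dS_0,\overline{P_0},\theta_0)\subseteq\bigoplus_{i=1}^{n_d}\mathcal{X}(S_i,\overline{P_i},\theta_i),$$ and equality holds if and only if all parameters are homogeneous, i.e. $S_i=S_0$, $\overline{P_i}=\overline{P_0}$ and $\theta_i=\theta_0$ for all $i$.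
   Context: $\oplus$ denotes the Minkowski sum $A\oplus B=\{a+b: a\in A, b\in B\}$. The set $\mathcal{X}(S,\overline{P},\theta)$ is the feasible real/reactive power set of a photovoltaic inverter with apparent power rating $S$, normalized available real power $\overline{P}$ (normalized with respect to $S$), and minimum power factor $\cos\theta$. *)

From Stdlib Require Import Reals Lra.
Open Scope R_scope.

Definition Xset (S Pbar theta : R) (P Q : R) : Prop :=
  0 <= P /\ P <= S * Pbar /\ Q ^ 2 <= S ^ 2 - P ^ 2 /\
  (theta = PI / 2 \/ Rabs Q <= tan theta * P).

Fixpoint rsum (f : nat -> R) (n : nat) : R :=
  match n with
  | O => 0
  | S k => rsum f k + f k
  end.

Fixpoint rmin_upto (f : nat -> R) (k : nat) : R :=
  match k with
  | O => f O
  | S k' => Rmin (rmin_upto f k') (f k)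
  end.

(* minimum over indices i < n (for n >= 1) *)
Definition rmin_lt (f : nat -> R) (n : nat) : R := rmin_upto f (Nat.pred n).

Definition msum (X : nat -> R -> R -> Prop) (n : nat) (P Q : R) : Prop :=
  exists p q : nat -> R,
    (forall i, (i < n)%nat -> X i (p i) (q i)) /\
    P = rsum p n /\ Q = rsum q n.

(* Each feasible set is convex and scales linearly with the
   rating: X(a) + X(b) is contained in X(a + b), and X(n S) = n X(S).  It is
   also monotone in all three parameters.  Hence a point of X(n S0) splits into
   n equal shares lying in X(S0, P0, theta0), which is contained in every
   X(S_i, P_i, theta_i); if all parameters coincide the converse inclusion is
   the additivity.  Conversely, if the sets are equal, the sum of the points
   (S_i P_i, 0) must lie in X(n S0), forcing S_i P_i = S0 P0 for all i; and an
   inverter with theta_i > theta0 contributes a point steeper than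
   tan(theta0), which X(n S0, P0, theta0) cannot contain. *)
From Stdlib Require Import Reals Lra Psatz.
Open Scope R_scope.

Lemma rmin_upto_le f k i : (i <= k)%nat -> rmin_upto f k <= f i.
Proof.
  induction k as [|k IH]; intros Hi; simpl.
  - replace i with O by lia; lra.
  - destruct (Nat.eq_dec i (S k)) as [->|Hne].
    + apply Rmin_r.
    + eapply Rle_trans; [apply Rmin_l | apply IH; lia].
Qed.

Lemma rmin_upto_attained f k : exists j, (j <= k)%nat /\ rmin_upto f k = f j.
Proof.
  induction k as [|k [j [Hj E]]]; simpl.
  - exists O; split; auto.
  - unfold Rmin; destruct (Rle_dec (rmin_upto f k) (f (S k))).
    + exists j; split; [lia | auto].
    + exists (S k); split; auto.
Qed.

Lemma rmin_lt_le f n i : (i < n)%nat -> rmin_lt f n <= f i.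
Proof. intros; apply rmin_upto_le; lia. Qed.

Lemma rmin_lt_in (A : R -> Prop) f n :
  (1 <= n)%nat -> (forall i, (i < n)%nat -> A (f i)) -> A (rmin_lt f n).
Proof.
  intros Hn HA; unfold rmin_lt.
  destruct (rmin_upto_attained f (Nat.pred n)) as [j [Hj ->]].
  apply HA; lia.
Qed.

Lemma rsum_const c n : rsum (fun _ => c) n = INR n * c.
Proof. induction n as [|n IH]; simpl rsum; [simpl; ring | rewrite IH, S_INR; ring]. Qed.

Lemma rsum_indicator g i n :
  rsum (fun k => if Nat.eq_dec k i then g else 0) n = if Nat.ltb i n then g else 0.
Proof.
  induction n as [|n IH]; simpl rsum; [reflexivity|].
  rewrite IH.
  destruct (Nat.ltb_spec i n), (Nat.ltb_spec i (S n)), (Nat.eq_dec n i);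
    try lia; ring.
Qed.

Lemma rsum_ge_const f a n :
  (forall i, (i < n)%nat -> a <= f i) -> INR n * a <= rsum f n.
Proof.
  induction n as [|n IH]; intros Hf; simpl rsum; [simpl; lra|].
  rewrite S_INR.
  assert (INR n * a <= rsum f n) by (apply IH; intros; apply Hf; lia).
  assert (a <= f n) by (apply Hf; lia).
  lra.
Qed.

Lemma rsum_ge_const_term f a n j :
  (forall i, (i < n)%nat -> a <= f i) -> (j < n)%nat ->
  INR n * a + (f j - a) <= rsum f n.
Proof.
  induction n as [|n IH]; intros Hf Hj; [lia|].
  simpl rsum; rewrite S_INR.
  destruct (Nat.eq_dec j n) as [->|Hne].
  - assert (INR n * a <= rsum f n) by (apply rsum_ge_const; intros; apply Hf; lia).
    lra.
  - assert (INR n * a + (f j - a) <= rsum f n) by (apply IH; [intros; apply Hf|]; lia).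
    assert (a <= f n) by (apply Hf; lia).
    lra.
Qed.

Lemma rsum_eq_of_le_const f a n :
  (forall i, (i < n)%nat -> a <= f i) -> rsum f n <= INR n * a ->
  forall i, (i < n)%nat -> f i = a.
Proof.
  intros Hf Hsum i Hi.
  pose proof (rsum_ge_const_term f a n i Hf Hi).
  pose proof (Hf i Hi).
  lra.
Qed.

Lemma msum_single (X : nat -> R -> R -> Prop) n i P Q :
  (forall k, (k < n)%nat -> X k 0 0) -> (i < n)%nat -> X i P Q -> msum X n P Q.
Proof.
  intros H0 Hi HX.
  exists (fun k => if Nat.eq_dec k i then P else 0),
         (fun k => if Nat.eq_dec k i then Q else 0).
  split.
  - intros k Hk; destruct (Nat.eq_dec k i) as [->|]; auto.
  - rewrite !rsum_indicator; destruct (Nat.ltb_spec i n); [auto | lia].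
Qed.

Lemma tan_nonneg x : 0 <= x < PI / 2 -> 0 <= tan x.
Proof.
  intros [H0 H1]; destruct (Req_dec x 0) as [->|Hne].
  - rewrite tan_0; lra.
  - left; apply tan_gt_0; lra.
Qed.

Lemma tan_le x y : 0 <= x -> x <= y -> y < PI / 2 -> tan x <= tan y.
Proof.
  intros; destruct (Req_dec x y) as [->|Hne]; [lra|].
  left; apply tan_increasing; pose proof PI_RGT_0; lra.
Qed.

Lemma dot_le_mul_norms a b P1 Q1 P2 Q2 : 0 <= a -> 0 <= b ->
  P1 ^ 2 + Q1 ^ 2 <= a ^ 2 -> P2 ^ 2 + Q2 ^ 2 <= b ^ 2 ->
  P1 * P2 + Q1 * Q2 <= a * b.
Proof.
  intros Ha Hb H1 H2.
  assert (Hlag : (P1 * P2 + Q1 * Q2)² <= (a * b)²).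
  { assert (E : (P1^2 + Q1^2) * (P2^2 + Q2^2)
                = (P1 * P2 + Q1 * Q2)^2 + (P1 * Q2 - Q1 * P2)^2) by ring.
    assert ((P1^2 + Q1^2) * (P2^2 + Q2^2) <= a^2 * b^2)
      by (apply Rmult_le_compat; nra).
    unfold Rsqr; pose proof (pow2_ge_0 (P1 * Q2 - Q1 * P2)); nra. }
  apply Rsqr_le_abs_0 in Hlag; rewrite (Rabs_pos_eq (a * b)) in Hlag by nra.
  pose proof (Rle_abs (P1 * P2 + Q1 * Q2)); lra.
Qed.

Lemma Xset_zero S Pb th : 0 <= S * Pb -> Xset S Pb th 0 0.
Proof.
  intros H; unfold Xset; rewrite Rabs_R0.
  repeat split; [lra | lra | nra | right; lra].
Qed.

Lemma Xset_max_real_power S Pb th :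
  0 <= S -> 0 <= Pb <= 1 -> 0 <= th <= PI / 2 -> Xset S Pb th (S * Pb) 0.
Proof.
  intros HS HPb Hth; unfold Xset; rewrite Rabs_R0.
  assert (0 <= S * Pb <= S) by nra.
  repeat split; [lra | lra | nra |].
  destruct (Req_dec th (PI / 2)) as [|Hne]; [left; auto | right].
  assert (0 <= tan th) by (apply tan_nonneg; lra).
  nra.
Qed.

Lemma Xset_add a b Pb th P1 Q1 P2 Q2 : 0 <= a -> 0 <= b ->
  Xset a Pb th P1 Q1 -> Xset b Pb th P2 Q2 ->
  Xset (a + b) Pb th (P1 + P2) (Q1 + Q2).
Proof.
  unfold Xset; intros Ha Hb [A1 [B1 [C1 D1]]] [A2 [B2 [C2 D2]]].
  assert (P1 * P2 + Q1 * Q2 <= a * b) by (apply dot_le_mul_norms; lra).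
  repeat split; [lra | nra | nra |].
  destruct D1 as [|D1]; [left; auto|]; destruct D2 as [|D2]; [left; auto|].
  right; pose proof (Rabs_triang Q1 Q2); lra.
Qed.

Lemma Xset_rsum (s p q : nat -> R) Pb th n :
  (forall i, (i < n)%nat -> 0 <= s i) ->
  (forall i, (i < n)%nat -> Xset (s i) Pb th (p i) (q i)) ->
  Xset (rsum s n) Pb th (rsum p n) (rsum q n).
Proof.
  induction n as [|n IH]; intros Hs HX; simpl rsum.
  - apply Xset_zero; lra.
  - apply Xset_add; [| apply Hs; lia | apply IH | apply HX; lia].
    + rewrite <- (Rmult_0_r (INR n)); apply rsum_ge_const.
      intros; apply Hs; lia.
    + intros; apply Hs; lia.
    + intros; apply HX; lia.
Qed.

Lemma Xset_mono S Pb th S' Pb' th' P Q :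
  0 <= S <= S' -> 0 <= Pb <= Pb' -> 0 <= th <= th' -> th' <= PI / 2 ->
  Xset S Pb th P Q -> Xset S' Pb' th' P Q.
Proof.
  unfold Xset; intros HS HPb Hth Hth' [A [B [C D]]].
  repeat split; [lra | nra | nra |].
  destruct D as [->|D]; [left; lra|].
  destruct (Req_dec th' (PI / 2)) as [|Hne]; [left; auto | right].
  assert (tan th <= tan th') by (apply tan_le; lra).
  nra.
Qed.

Lemma Xset_scale_down l S Pb th P Q :
  0 < l -> Xset (l * S) Pb th P Q -> Xset S Pb th (P / l) (Q / l).
Proof.
  intros Hl; unfold Xset.
  set (x := P / l); set (y := Q / l).
  replace P with (l * x) by (unfold x; field; lra).
  replace Q with (l * y) by (unfold y; field; lra).
  clearbody x y.
  rewrite Rabs_mult, (Rabs_pos_eq l) by lra.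
  intros [A [B [C D]]].
  assert (Hl2 : 0 < l ^ 2) by (apply pow_lt; lra).
  repeat split; [nra | nra | |].
  - rewrite !Rpow_mult_distr in C; nra.
  - destruct D as [|D]; [left; auto | right; nra].
Qed.

(* With t (1 + c) = S Pb the point (t, c t) stays in the disc of radius S,
   since t^2 (1 + c^2) <= (t (1 + c))^2. *)
Lemma Xset_ray S Pb th c :
  0 < S -> 0 < Pb <= 1 -> 0 <= c -> (th = PI / 2 \/ c <= tan th) ->
  Xset S Pb th (S * Pb / (1 + c)) (c * (S * Pb / (1 + c))).
Proof.
  intros HS HPb Hc Hth.
  set (t := S * Pb / (1 + c)).
  assert (Ht : 0 < t) by (unfold t; apply Rdiv_lt_0_compat; nra).
  assert (Ht1 : t * (1 + c) = S * Pb) by (unfold t; field; lra).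
  clearbody t.
  assert (t ^ 2 * (1 + c ^ 2) <= (S * Pb) ^ 2) by (rewrite <- Ht1; nra).
  assert (0 <= S * Pb <= S) by nra.
  unfold Xset; rewrite Rabs_pos_eq by nra.
  repeat split; [lra | nra | nra |].
  destruct Hth as [|Hth]; [left; auto | right; nra].
Qed.

Lemma Xset_steeper_than S Pb th th' :
  0 < S -> 0 < Pb <= 1 -> 0 <= th' < th -> th <= PI / 2 ->
  exists P Q, Xset S Pb th P Q /\ tan th' * P < Q.
Proof.
  intros HS HPb Hth' Hth.
  assert (0 <= tan th') by (apply tan_nonneg; lra).
  assert (Hc : exists c, tan th' < c /\ (th = PI / 2 \/ c <= tan th)).
  { destruct (Req_dec th (PI / 2)) as [|Hne].
    - exists (tan th' + 1); split; [lra | left; auto].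
    - exists (tan th); split; [| right; lra].
      apply tan_increasing; pose proof PI_RGT_0; lra. }
  destruct Hc as [c [Hc Hcth]].
  exists (S * Pb / (1 + c)), (c * (S * Pb / (1 + c))); split.
  - apply Xset_ray; auto; lra.
  - apply Rmult_lt_compat_r; [apply Rdiv_lt_0_compat; nra | lra].
Qed.

Lemma msum_Xset_sub (X : nat -> R -> R -> Prop) n S Pb th P Q :
  0 <= S -> (forall i P Q, (i < n)%nat -> X i P Q -> Xset S Pb th P Q) ->
  msum X n P Q -> Xset (INR n * S) Pb th P Q.
Proof.
  intros HS HX [p [q [Hpq [-> ->]]]].
  rewrite <- rsum_const; apply Xset_rsum; intros i Hi; [lra | apply (HX i), Hpq; auto].
Qed.

Section LowerParameters.

Variables (n : nat) (S Pb th : nat -> R) (S0 P0 th0 : R).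
Hypothesis Hn : (1 <= n)%nat.
Hypothesis HS0 : 0 < S0.
Hypothesis HP0 : 0 < P0.
Hypothesis Hth0 : 0 <= th0.
Hypothesis Hlow :
  forall i, (i < n)%nat -> S0 <= S i /\ P0 <= Pb i /\ th0 <= th i <= PI / 2.
Hypothesis HPb1 : forall i, (i < n)%nat -> Pb i <= 1.

Let X i := Xset (S i) (Pb i) (th i).

Lemma Xset_lower_sub_msum P Q : Xset (INR n * S0) P0 th0 P Q -> msum X n P Q.
Proof.
  intros HPQ.
  assert (HN : 0 < INR n) by (apply lt_0_INR; lia).
  exists (fun _ => P / INR n), (fun _ => Q / INR n); split.
  - intros i Hi; destruct (Hlow i Hi) as [HSi [HPbi Hthi]].
    apply (Xset_mono S0 P0 th0); try lra.
    apply Xset_scale_down; auto.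
  - rewrite !rsum_const; split; field; lra.
Qed.

Hypothesis Hsub : forall P Q, msum X n P Q -> Xset (INR n * S0) P0 th0 P Q.

Lemma ratings_eq_lower i : (i < n)%nat -> S i = S0 /\ Pb i = P0.
Proof.
  intros Hi.
  assert (Hmax : msum X n (rsum (fun k => S k * Pb k) n) (rsum (fun _ => 0) n)).
  { exists (fun k => S k * Pb k), (fun _ => 0); split; auto.
    intros k Hk; destruct (Hlow k Hk) as [? [? ?]].
    apply Xset_max_real_power; try split; try lra; apply HPb1; auto. }
  apply Hsub in Hmax; destruct Hmax as [_ [Hsum _]].
  assert (Heq : S i * Pb i = S0 * P0).
  { apply (rsum_eq_of_le_const (fun k => S k * Pb k) (S0 * P0) n); auto; [|lra].
    intros k Hk; destruct (Hlow k Hk) as [? [? ?]].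
    apply Rmult_le_compat; lra. }
  destruct (Hlow i Hi) as [? [? ?]].
  split; nra.
Qed.

Lemma angle_eq_lower i : (i < n)%nat -> th i = th0.
Proof.
  intros Hi; destruct (Hlow i Hi) as [HSi [HPbi Hthi]].
  destruct (Req_dec (th i) th0) as [|Hne]; [auto | exfalso].
  destruct (Xset_steeper_than (S i) (Pb i) (th i) th0) as [P [Q [HX Hsteep]]];
    try split; try lra; try apply HPb1; auto.
  assert (HPQ : msum X n P Q).
  { apply (msum_single X n i); auto.
    intros k Hk; destruct (Hlow k Hk) as [? [? ?]].
    apply Xset_zero; nra. }
  apply Hsub in HPQ; destruct HPQ as [_ [_ [_ [Hpi | Htan]]]]; [lra|].
  pose proof (Rle_abs Q); lra.
Qed.

End LowerParameters.

Theorem theorem2 (nd : nat) (Srat Pb th : nat -> R)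
  (Hnd : (1 <= nd)%nat)
  (HS : forall i, (i < nd)%nat -> 0 < Srat i)
  (HPb : forall i, (i < nd)%nat -> 0 < Pb i <= 1)
  (Hth : forall i, (i < nd)%nat -> 0 <= th i <= PI / 2) :
  let S0 := rmin_lt Srat nd in
  let P0 := rmin_lt Pb nd in
  let th0 := rmin_lt th nd in
  let Xi := fun i => Xset (Srat i) (Pb i) (th i) in
  (forall P Q, Xset (INR nd * S0) P0 th0 P Q -> msum Xi nd P Q) /\
  ((forall P Q, Xset (INR nd * S0) P0 th0 P Q <-> msum Xi nd P Q) <->
   (forall i, (i < nd)%nat -> Srat i = S0 /\ Pb i = P0 /\ th i = th0)).
Proof.
  intros S0 P0 th0 Xi.
  assert (HS0 : 0 < S0) by (apply (rmin_lt_in (Rlt 0)); auto).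
  assert (HP0 : 0 < P0) by (apply (rmin_lt_in (Rlt 0)); auto; apply HPb).
  assert (Hth0 : 0 <= th0) by (apply (rmin_lt_in (Rle 0)); auto; apply Hth).
  assert (HPb1 : forall i, (i < nd)%nat -> Pb i <= 1) by apply HPb.
  assert (Hlow : forall i, (i < nd)%nat ->
            S0 <= Srat i /\ P0 <= Pb i /\ th0 <= th i <= PI / 2).
  { intros i Hi; repeat split; try apply rmin_lt_le; try apply Hth; auto. }
  assert (Hincl := Xset_lower_sub_msum nd Srat Pb th S0 P0 th0
                     Hnd HS0 HP0 Hth0 Hlow).
  split; [exact Hincl | split].
  - intros Heq i Hi.
    assert (Hsub : forall P Q, msum Xi nd P Q -> Xset (INR nd * S0) P0 th0 P Q)
      by (intros; apply Heq; auto).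
    destruct (ratings_eq_lower nd Srat Pb th S0 P0 th0 HS0 HP0 Hth0 Hlow HPb1 Hsub i Hi).
    repeat split; auto.
    apply (angle_eq_lower nd Srat Pb th S0 P0 th0 HS0 HP0 Hth0 Hlow HPb1 Hsub i Hi).
  - intros Hhom P Q; split; [apply Hincl|].
    apply msum_Xset_sub; [lra|].
    intros i P' Q' Hi; unfold Xi.
    destruct (Hhom i Hi) as [-> [-> ->]]; auto.
Qed.
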